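(* There exists an absolute constant $A \geq 10$ such that the following holds. Let $0 < \epsilon < 1$, $H \geq 1$, let $L_{1},L_{2} \subset \mathbb{H}$ be horizontal lines, let $p \in L_{1}$ and $r > 0$. If $$B(p,AH^{3}\epsilon^{-2}r) \cap L_{2} \subset N(L_{1},Hr),$$ then there exists a horizontal line $L \subset \mathbb{V}(L_{1})$ with $B(p,Hr) \cap L_{2} \subset N(L,\epsilon r)$.
   Context: $\mathbb{H}$ is $\mathbb{R}^{3}$ with group law $(x_{1},y_{1},t_{1}) \cdot (x_{2},y_{2},t_{2}) = (x_{1}+x_{2},y_{1}+y_{2},t_{1}+t_{2}+\tfrac{1}{2}(x_{1}y_{2}-x_{2}y_{1}))$, metric $d(p,q) = \|q^{-1}\cdot p\|$ with $\|(x,y,t)\| = \max\{\sqrt{x^{2}+y^{2}},\sqrt{|t|}\}$; $B(p,r)$ is the closed $d$-ball and $N(E,\delta) = \{q : \operatorname{dist}(q,E) \leq \delta\}$. A horizontal line is a set $q \cdot \{(sa,sb,0) : s \in \mathbb{R}\}$ with $(a,b) \neq 0$. For a horizontal line $L$, $\mathbb{V}(L)$ is the unique vertical plane containing $L$, i.e. $\{(x,y,t) : (x,y) \in \pi(L), t \in \mathbb{R}\}$ where $\pi(x,y,t) = (x,y)$. *)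

(* Heisenberg group H = R^3 with the Korányi-type max norm. *)
From Stdlib Require Import Reals Lra.
Open Scope R_scope.

Definition pt : Type := (R * R * R)%type.

Definition hmul (p q : pt) : pt :=
  match p, q with
  | (x1, y1, t1), (x2, y2, t2) =>
      (x1 + x2, y1 + y2, t1 + t2 + / 2 * (x1 * y2 - x2 * y1))
  end.

Definition hinv (p : pt) : pt :=
  match p with (x, y, t) => (- x, - y, - t) end.

Definition hnorm (p : pt) : R :=
  match p with (x, y, t) => Rmax (sqrt (x * x + y * y)) (sqrt (Rabs t)) end.

Definition hdist (p q : pt) : R := hnorm (hmul (hinv q) p).

Definition ball (p : pt) (r : R) : pt -> Prop := fun q => hdist p q <= r.

(* dist(q,E) <= delta, i.e. inf_{e in E} d(q,e) <= delta (E nonempty) *)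
Definition dist_le (q : pt) (E : pt -> Prop) (delta : R) : Prop :=
  forall eta, 0 < eta -> exists e, E e /\ hdist q e < delta + eta.

Definition nbhd (E : pt -> Prop) (delta : R) : pt -> Prop :=
  fun q => dist_le q E delta.

Definition is_hline (L : pt -> Prop) : Prop :=
  exists (q : pt) (a b : R), (a <> 0 \/ b <> 0) /\
    forall z, L z <-> exists s : R, z = hmul q (s * a, s * b, 0).

Definition proj (p : pt) : R * R := match p with (x, y, _) => (x, y) end.

Definition vplane (L : pt -> Prop) : pt -> Prop :=
  fun z => exists w, L w /\ proj w = proj z.

Definition subset (E F : pt -> Prop) : Prop := forall z, E z -> F z.
Definition inter (E F : pt -> Prop) : pt -> Prop := fun z => E z /\ F z.

(* Translate [p] to the origin and rotate so that [L1] becomes the x-axis. If [L2] meets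
   [B(p, h)] (h = H r), it is s |-> w0 (s u, s v, 0) with |w0| <= h. Along it, the y-coordinate
   y0 + s v is affine and the height over the x-axis, t - x y / 2, is the quadratic
   C - s y0 u - s^2 u v / 2. The hypothesis at scale rho = A H^3 eps^-2 r bounds both at
   s = 0 and s = +-rho/2, which forces rho |v| = O(h), rho |y0 u| = O(h^2) and
   rho^2 |u v| = O(h^2). Back inside [B(p, h)] this gives |y| <= eps r and a height within
   (eps r)^2 of C, i.e. the points of [L2] are eps r-close to the parallel of [L1] at height
   C, which lies in V(L1). *)
From Stdlib Require Import Reals Lra Psatz Nsatz Classical.
Open Scope R_scope.

Lemma Rabs_le_iff x K : Rabs x <= K <-> -K <= x <= K.
Proof. unfold Rabs; destruct (Rcase_abs x); split; intros; lra. Qed.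

Lemma Rabs_le_iff_sqr x K : 0 <= K -> Rabs x <= K <-> x * x <= K * K.
Proof.
  intros HK; rewrite Rabs_le_iff; split; intros Hx; [nra|].
  split; nra.
Qed.

Lemma sqrt_le_iff a K : 0 <= a -> 0 <= K -> sqrt a <= K <-> a <= K * K.
Proof.
  intros Ha HK; rewrite <- (sqrt_square K) at 1 by exact HK.
  split; [apply sqrt_le_0 | apply sqrt_le_1]; nra.
Qed.

Lemma Rmax_le_iff x y z : Rmax x y <= z <-> x <= z /\ y <= z.
Proof.
  split; [|intros []; apply Rmax_lub; assumption].
  intros H; split; eapply Rle_trans; [apply Rmax_l | | apply Rmax_r |]; exact H.
Qed.

Lemma hnorm_ge0 z : 0 <= hnorm z.
Proof.
  destruct z as [[x y] t]; eapply Rle_trans; [apply sqrt_pos | apply Rmax_r].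
Qed.

Lemma hnorm_le x y t K : 0 <= K ->
  hnorm (x, y, t) <= K <-> x * x + y * y <= K * K /\ Rabs t <= K * K.
Proof.
  intros HK; unfold hnorm; rewrite Rmax_le_iff, !sqrt_le_iff;
    auto using Rabs_pos; nra.
Qed.

Lemma lagrange_bounds x1 y1 x2 y2 K1 K2 : 0 <= K1 -> 0 <= K2 ->
  x1 * x1 + y1 * y1 <= K1 * K1 -> x2 * x2 + y2 * y2 <= K2 * K2 ->
  Rabs (x1 * x2 + y1 * y2) <= K1 * K2 /\ Rabs (x1 * y2 - x2 * y1) <= K1 * K2.
Proof.
  intros HK1 HK2 H1 H2.
  assert (Hprod : (x1 * x1 + y1 * y1) * (x2 * x2 + y2 * y2) <= (K1 * K2) * (K1 * K2))
    by (apply Rle_trans with ((K1 * K1) * (x2 * x2 + y2 * y2)); nra).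
  pose proof (Rle_0_sqr (x1 * x2 + y1 * y2)); pose proof (Rle_0_sqr (x1 * y2 - x2 * y1)).
  unfold Rsqr in *.
  assert (HK : 0 <= K1 * K2) by nra.
  (* Lagrange's identity: the two squares add up to the product of the squared norms. *)
  split; apply Rabs_le_iff_sqr; auto; nra.
Qed.

Lemma hnorm_hmul_le p q : hnorm (hmul p q) <= hnorm p + hnorm q.
Proof.
  destruct p as [[x1 y1] t1], q as [[x2 y2] t2]; simpl hmul.
  pose proof (hnorm_ge0 (x1, y1, t1)) as HK1; pose proof (hnorm_ge0 (x2, y2, t2)) as HK2.
  set (K1 := hnorm (x1, y1, t1)) in *; set (K2 := hnorm (x2, y2, t2)) in *.
  destruct (proj1 (hnorm_le x1 y1 t1 K1 HK1) (Rle_refl _)) as [Hxy1 Ht1].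
  destruct (proj1 (hnorm_le x2 y2 t2 K2 HK2) (Rle_refl _)) as [Hxy2 Ht2].
  destruct (lagrange_bounds x1 y1 x2 y2 K1 K2) as [Hdot Hcross]; auto.
  apply Rabs_le_iff in Hdot, Hcross, Ht1, Ht2.
  apply hnorm_le; [lra|split; [nra|apply Rabs_le_iff; split; nra]].
Qed.

Lemma hnorm_horizontal_le s u v : u * u + v * v = 1 -> hnorm (s * u, s * v, 0) <= Rabs s.
Proof.
  intros Huv; apply hnorm_le; [apply Rabs_pos|].
  rewrite Rabs_R0, <- Rabs_mult; split; [|apply Rabs_pos].
  unfold Rabs; destruct (Rcase_abs (s * s)); nra.
Qed.

Ltac pt_eq := apply (f_equal2 (@pair _ _)); [apply (f_equal2 (@pair _ _))|].

Lemma hmul_assoc a b c : hmul a (hmul b c) = hmul (hmul a b) c.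
Proof.
  destruct a as [[a1 a2] a3], b as [[b1 b2] b3], c as [[c1 c2] c3]; simpl.
  pt_eq; ring.
Qed.

Lemma hmul_hinv_cancel g z w : hmul (hinv (hmul g w)) (hmul g z) = hmul (hinv w) z.
Proof.
  destruct g as [[a1 a2] a3], w as [[b1 b2] b3], z as [[c1 c2] c3]; simpl.
  pt_eq; ring.
Qed.

Lemma hdist_hmul_l g z w : hdist (hmul g z) (hmul g w) = hdist z w.
Proof. unfold hdist; rewrite hmul_hinv_cancel; reflexivity. Qed.

Lemma hdist_origin_l z : hdist (0, 0, 0) z = hnorm z.
Proof.
  destruct z as [[x y] t]; unfold hdist, hnorm; simpl.
  rewrite <- Rabs_Ropp; f_equal; [f_equal; ring | f_equal; f_equal; ring].
Qed.

Definition rot (c d : R) (z : pt) : pt :=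
  match z with (x, y, t) => (c * x + d * y, - d * x + c * y, t) end.

Section Rotation.

Variables c d : R.
Hypothesis Hcd : c * c + d * d = 1.

Lemma rot_hmul z w : rot c d (hmul z w) = hmul (rot c d z) (rot c d w).
Proof.
  destruct z as [[a1 a2] a3], w as [[b1 b2] b3]; simpl.
  pt_eq; [ring | ring | nsatz].
Qed.

Lemma rot_hinv z : rot c d (hinv z) = hinv (rot c d z).
Proof. destruct z as [[a1 a2] a3]; simpl; pt_eq; ring. Qed.

Lemma hnorm_rot z : hnorm (rot c d z) = hnorm z.
Proof.
  destruct z as [[x y] t]; unfold hnorm; simpl.
  f_equal; f_equal; nsatz.
Qed.

Lemma hdist_rot z w : hdist (rot c d z) (rot c d w) = hdist z w.
Proof. unfold hdist; rewrite <- rot_hinv, <- rot_hmul, hnorm_rot; reflexivity. Qed.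

Lemma rot_horizontal s u v :
  rot c d (s * u, s * v, 0) = (s * (c * u + d * v), s * (- d * u + c * v), 0).
Proof. simpl; pt_eq; ring. Qed.

Lemma rot_unit u v : u * u + v * v = 1 ->
  (c * u + d * v) * (c * u + d * v) + (- d * u + c * v) * (- d * u + c * v) = 1.
Proof. intros Huv; nsatz. Qed.

End Rotation.

Definition hline_through (q : pt) (a b : R) : pt -> Prop :=
  fun z => exists s, z = hmul q (s * a, s * b, 0).

Lemma hline_through_shift q a b s0 s :
  hmul (hmul q (s0 * a, s0 * b, 0)) (s * a, s * b, 0) = hmul q ((s0 + s) * a, (s0 + s) * b, 0).
Proof. destruct q as [[x y] t]; simpl; pt_eq; ring. Qed.

Lemma hline_through_rebase q a b z0 : hline_through q a b z0 ->
  forall z, hline_through q a b z <-> hline_through z0 a b z.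
Proof.
  intros [s0 ->] z; split; intros [s ->].
  - exists (s - s0); rewrite hline_through_shift; do 3 f_equal; ring.
  - exists (s0 + s); rewrite hline_through_shift; reflexivity.
Qed.

Lemma is_hline_through q a b : a * a + b * b = 1 -> is_hline (hline_through q a b).
Proof.
  intros Hab; exists q, a, b; split; [|reflexivity].
  destruct (Req_dec a 0); [right; nra | left; assumption].
Qed.

Lemma is_hline_unit_at L z0 : is_hline L -> L z0 ->
  exists a b, a * a + b * b = 1 /\ forall z, L z <-> hline_through z0 a b z.
Proof.
  intros [q [a [b [Hab HL]]]] Hz0.
  assert (Hpos : 0 < a * a + b * b) by (destruct Hab; nra).
  set (n := sqrt (a * a + b * b)).
  assert (Hn : 0 < n) by (apply sqrt_lt_R0; lra).
  assert (Hnn : n * n = a * a + b * b) by (apply sqrt_sqrt; lra).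
  assert (HLn : forall z, L z <-> hline_through q (a / n) (b / n) z).
  { intros z; rewrite HL; split; intros [s ->].
    - exists (s * n); do 3 f_equal; field; lra.
    - exists (s / n); do 3 f_equal; field; lra. }
  exists (a / n), (b / n); split.
  - replace (a / n * (a / n) + b / n * (b / n)) with ((a * a + b * b) / (n * n))
      by (field; lra).
    rewrite Hnn; field; lra.
  - intros z; rewrite HLn; apply hline_through_rebase, HLn, Hz0.
Qed.

Lemma hline_through_vplane p a b C :
  subset (hline_through (hmul p (0, 0, C)) a b) (vplane (hline_through p a b)).
Proof.
  intros z [s ->]; exists (hmul p (s * a, s * b, 0)); split; [exists s; reflexivity|].
  destruct p as [[x y] t]; simpl; f_equal; ring.
Qed.

(* Left translation by [p^-1] followed by [rot c d]: an isometry sending [p] to the origin and,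
   when (c, d) is the direction of a horizontal line through [p], that line to the x-axis. *)
Definition frame (p : pt) (c d : R) (z : pt) : pt := rot c d (hmul (hinv p) z).

Section Frame.

Variables (p : pt) (c d : R).
Hypothesis Hcd : c * c + d * d = 1.

Lemma hdist_frame z w : hdist (frame p c d z) (frame p c d w) = hdist z w.
Proof. unfold frame; rewrite hdist_rot, hdist_hmul_l by exact Hcd; reflexivity. Qed.

Lemma ball_frame K z : ball p K z <-> hnorm (frame p c d z) <= K.
Proof.
  unfold ball; rewrite <- hdist_frame.
  replace (frame p c d p) with (0, 0, 0)
    by (destruct p as [[x y] t]; unfold frame; simpl; pt_eq; ring).
  rewrite hdist_origin_l; reflexivity.
Qed.

Lemma frame_hmul z w : frame p c d (hmul z w) = hmul (frame p c d z) (rot c d w).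
Proof. unfold frame; rewrite hmul_assoc, rot_hmul by exact Hcd; reflexivity. Qed.

Lemma frame_hline_through_vshift C s :
  frame p c d (hmul (hmul p (0, 0, C)) (s * c, s * d, 0)) = (s, 0, C).
Proof.
  destruct p as [[x y] t]; unfold frame; simpl; pt_eq; [| ring | ring].
  transitivity (s * (c * c + d * d)); [ring | rewrite Hcd; ring].
Qed.

Lemma frame_hline_through s : frame p c d (hmul p (s * c, s * d, 0)) = (s, 0, 0).
Proof.
  rewrite <- (frame_hline_through_vshift 0 s); f_equal.
  destruct p as [[x y] t]; simpl; pt_eq; ring.
Qed.

End Frame.

Definition xcoord (z : pt) : R := match z with (x, _, _) => x end.
Definition ycoord (z : pt) : R := match z with (_, y, _) => y end.

(* The t-coordinate of [(xcoord z, 0, 0)^-1 z]: the height of [z] over the x-axis. *)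
Definition twist (z : pt) : R := match z with (x, y, t) => t - x * y / 2 end.

Lemma twist_hmul_horizontal z a b :
  twist (hmul z (a, b, 0)) = twist z - a * ycoord z - a * b / 2.
Proof. destruct z as [[x y] t]; simpl; field. Qed.

Lemma hdist_xaxis_above z C : hdist z (xcoord z, 0, C) = hnorm (0, ycoord z, twist z - C).
Proof. destruct z as [[x y] t]; unfold hdist; f_equal; simpl; pt_eq; field. Qed.

Lemma near_xaxis_bounds z m k : 0 <= k -> hdist z (m, 0, 0) <= k ->
  Rabs (ycoord z) <= k /\ Rabs (twist z) <= 2 * (k * k).
Proof.
  destruct z as [[x y] t]; intros Hk Hd; simpl.
  replace (hdist (x, y, t) (m, 0, 0)) with (hnorm (x - m, y, t - m * y / 2)) in Hd
    by (unfold hdist; f_equal; simpl; pt_eq; field).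
  apply hnorm_le in Hd as [Hxy Ht]; [|exact Hk].
  apply Rabs_le_iff in Ht.
  pose proof (Rle_0_sqr (x - m)); pose proof (Rle_0_sqr (x - m - y));
    pose proof (Rle_0_sqr (x - m + y)); unfold Rsqr in *.
  split; [apply Rabs_le_iff_sqr; [exact Hk | lra]|].
  (* [twist] differs from the vertical coordinate [t - m y / 2] by [(x - m) y / 2]. *)
  apply Rabs_le_iff; split; nra.
Qed.

(* Normalized coordinates: the x-axis plays [L1], the line through [(x0, y0, t0)] with
   direction [(u, v)] plays [L2], and [Hnear] is the hypothesis of the theorem at scale [rho]. *)
Section HlineNearXAxis.

Variables (x0 y0 t0 u v h e rho : R).
Hypothesis Huv : u * u + v * v = 1.
Hypothesis He : 0 < e.
Hypothesis Heh : e <= h.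
Hypothesis Hrho : 1000 * (h * h * h) <= rho * (e * e).
Hypothesis Hz0 : hnorm (x0, y0, t0) <= h.
Hypothesis Hnear : forall s, hnorm (hmul (x0, y0, t0) (s * u, s * v, 0)) <= rho ->
  exists m, hdist (hmul (x0, y0, t0) (s * u, s * v, 0)) (m, 0, 0) <= 2 * h.

Lemma rho_ge_1000h : 1000 * h <= rho.
Proof.
  assert (Hee : e * e <= h * h) by nra.
  assert (1000 * h * (e * e) <= 1000 * (h * h * h)) by nra.
  apply Rmult_le_reg_r with (e * e); nra.
Qed.

Lemma rho_scale_bounds :
  1000 * (h * h) <= rho * e /\ 1000000 * (h * h * (h * h)) <= rho * rho * (e * e).
Proof.
  split.
  - assert (0 <= h * h * (h - e)) by (apply Rmult_le_pos; nra).
    apply Rmult_le_reg_r with e; lra.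
  - assert ((1000 * (h * h * h)) * (1000 * (h * h * h)) <= (rho * (e * e)) * (rho * (e * e)))
      by (apply Rmult_le_compat; nra).
    assert (0 <= h * h * (h * h) * (h * h - e * e)) by (apply Rmult_le_pos; nra).
    apply Rmult_le_reg_r with (e * e); nra.
Qed.

Lemma test_point_bounds s : Rabs s <= rho / 2 ->
  Rabs (y0 + s * v) <= 2 * h /\
  Rabs (twist (x0, y0, t0) - s * u * y0 - s * u * (s * v) / 2) <= 8 * (h * h).
Proof.
  intros Hs; pose proof rho_ge_1000h.
  assert (Hball : hnorm (hmul (x0, y0, t0) (s * u, s * v, 0)) <= rho).
  { eapply Rle_trans; [apply hnorm_hmul_le|].
    pose proof (hnorm_horizontal_le s u v Huv); lra. }
  destruct (Hnear s Hball) as [m Hm].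
  destruct (near_xaxis_bounds _ _ (2 * h) ltac:(lra) Hm) as [Hy Ht].
  rewrite twist_hmul_horizontal in Ht; simpl in Hy, Ht |- *.
  split; [exact Hy | lra].
Qed.

Lemma hline_coefficient_bounds :
  Rabs (rho * v) <= 4 * h /\ Rabs (rho * (y0 * u)) <= 16 * (h * h) /\
  Rabs (rho * rho * (u * v)) <= 128 * (h * h).
Proof.
  pose proof rho_ge_1000h.
  destruct (test_point_bounds (rho / 2)) as [Hy1 Ht1];
    [rewrite Rabs_pos_eq; lra|].
  destruct (test_point_bounds (- (rho / 2))) as [Hy2 Ht2];
    [rewrite Rabs_Ropp, Rabs_pos_eq; lra|].
  destruct (test_point_bounds 0) as [_ Ht0]; [rewrite Rabs_R0; lra|].
  apply Rabs_le_iff in Hy1, Hy2, Ht1, Ht2, Ht0.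
  (* the twist is quadratic along the line: its first and second differences isolate
     the coefficients [y0 u] and [u v] *)
  split; [|split]; apply Rabs_le_iff; split; nra.
Qed.

Lemma direction_nearly_horizontal : Rabs v <= 1 / 250 /\ 1 / 2 <= Rabs u.
Proof.
  pose proof rho_ge_1000h; destruct hline_coefficient_bounds as [Hv _].
  rewrite Rabs_mult, Rabs_pos_eq in Hv by lra.
  assert (Hv' : Rabs v <= 1 / 250) by (apply Rmult_le_reg_l with rho; nra).
  split; [exact Hv'|].
  apply Rabs_le_iff in Hv'; unfold Rabs; destruct (Rcase_abs u); nra.
Qed.

Lemma hline_param_bound s : hnorm (hmul (x0, y0, t0) (s * u, s * v, 0)) <= h -> Rabs s <= 4 * h.
Proof.
  intros Hs; destruct direction_nearly_horizontal as [_ Hu].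
  apply hnorm_le in Hs as [Hs _]; [|lra]; apply hnorm_le in Hz0 as [Hxy0 _]; [|lra].
  simpl in Hs.
  pose proof (Rle_0_sqr (y0 + s * v)); pose proof (Rle_0_sqr y0); unfold Rsqr in *.
  assert (Hx : Rabs (x0 + s * u) <= h) by (apply Rabs_le_iff_sqr; lra).
  assert (Hx0 : Rabs x0 <= h) by (apply Rabs_le_iff_sqr; lra).
  assert (Hsu : Rabs s * Rabs u <= 2 * h).
  { apply Rabs_le_iff in Hx, Hx0; rewrite <- Rabs_mult; apply Rabs_le_iff; lra. }
  pose proof (Rabs_pos s); nra.
Qed.

Lemma hline_ycoord_small s : hnorm (hmul (x0, y0, t0) (s * u, s * v, 0)) <= h ->
  Rabs (y0 + s * v) <= e.
Proof.
  intros Hs; pose proof (hline_param_bound s Hs) as Hs4; pose proof rho_ge_1000h.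
  destruct rho_scale_bounds as [Hrho_e _]; destruct direction_nearly_horizontal as [_ Hu].
  destruct hline_coefficient_bounds as [Hv [Hyu _]].
  rewrite Rabs_mult, (Rabs_pos_eq rho) in Hv, Hyu by lra; rewrite Rabs_mult in Hyu.
  pose proof (Rabs_pos s); pose proof (Rabs_pos v); pose proof (Rabs_pos y0).
  assert (Hy0 : rho * Rabs y0 <= 32 * (h * h)).
  { assert (0 <= rho * Rabs y0 * (Rabs u - 1 / 2))
      by (apply Rmult_le_pos; [apply Rmult_le_pos|]; lra).
    lra. }
  assert (Hsv : rho * (Rabs s * Rabs v) <= 16 * (h * h)) by nra.
  eapply Rle_trans; [apply Rabs_triang|]; rewrite Rabs_mult.
  apply Rmult_le_reg_l with rho; nra.
Qed.

Lemma hline_twist_close s : hnorm (hmul (x0, y0, t0) (s * u, s * v, 0)) <= h ->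
  Rabs (s * u * y0 + s * u * (s * v) / 2) <= e * e.
Proof.
  intros Hs; pose proof (hline_param_bound s Hs) as Hs4; pose proof rho_ge_1000h.
  destruct rho_scale_bounds as [_ Hrho_e2].
  destruct hline_coefficient_bounds as [_ [Hyu Huv']].
  rewrite Rabs_mult, (Rabs_pos_eq rho) in Hyu by lra.
  rewrite Rabs_mult, Rabs_pos_eq in Huv' by nra.
  pose proof (Rabs_pos s); pose proof (Rabs_pos (y0 * u)); pose proof (Rabs_pos (u * v)).
  assert (Hlin : Rabs (s * (y0 * u)) <= e * e / 10).
  { assert (rho * (Rabs s * Rabs (y0 * u)) <= 64 * (h * h * h)) by nra.
    rewrite Rabs_mult; apply Rmult_le_reg_l with rho; nra. }
  assert (Hquad : Rabs (s * s * (u * v)) <= e * e / 10).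
  { assert ((Rabs s * Rabs s) * (rho * rho * Rabs (u * v)) <= (16 * (h * h)) * (128 * (h * h)))
      by (apply Rmult_le_compat; nra).
    assert (0 <= rho * rho * (e * e)) by nra.
    rewrite Rabs_mult, (Rabs_mult s s); apply Rmult_le_reg_l with (rho * rho); nra. }
  replace (s * u * y0 + s * u * (s * v) / 2) with (s * (y0 * u) + s * s * (u * v) / 2)
    by field.
  apply Rabs_le_iff in Hlin, Hquad; apply Rabs_le_iff; lra.
Qed.

Lemma hline_close_to_xaxis s : hnorm (hmul (x0, y0, t0) (s * u, s * v, 0)) <= h ->
  hdist (hmul (x0, y0, t0) (s * u, s * v, 0)) (x0 + s * u, 0, twist (x0, y0, t0)) <= e.
Proof.
  intros Hs; pose proof (hline_ycoord_small s Hs) as Hy.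
  change (x0 + s * u) with (xcoord (hmul (x0, y0, t0) (s * u, s * v, 0))).
  rewrite hdist_xaxis_above, twist_hmul_horizontal; simpl ycoord.
  apply hnorm_le; [lra|]; split.
  - rewrite Rabs_le_iff_sqr in Hy by lra; lra.
  - replace (twist (x0, y0, t0) - s * u * y0 - s * u * (s * v) / 2 - twist (x0, y0, t0))
      with (- (s * u * y0 + s * u * (s * v) / 2)) by ring.
    rewrite Rabs_Ropp; apply hline_twist_close, Hs.
Qed.

End HlineNearXAxis.

Section NormalizedLines.

Variables (L1 L2 : pt -> Prop) (p z0 : pt) (a b u v : R).
Hypothesis Hab : a * a + b * b = 1.
Hypothesis Huv : u * u + v * v = 1.
Hypothesis HL1 : forall z, L1 z <-> hline_through p a b z.
Hypothesis HL2 : forall z, L2 z <-> hline_through z0 u v z.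

Lemma frame_hline_point s :
  frame p a b (hmul z0 (s * u, s * v, 0))
  = hmul (frame p a b z0) (s * (a * u + b * v), s * (- b * u + a * v), 0).
Proof. rewrite frame_hmul, rot_horizontal by exact Hab; reflexivity. Qed.

Lemma frame_near_xaxis h rho : 0 < h ->
  subset (inter (ball p rho) L2) (nbhd L1 h) ->
  forall s, hnorm (frame p a b (hmul z0 (s * u, s * v, 0))) <= rho ->
  exists m, hdist (frame p a b (hmul z0 (s * u, s * v, 0))) (m, 0, 0) <= 2 * h.
Proof.
  intros Hh Hsub s Hs.
  assert (Hz : inter (ball p rho) L2 (hmul z0 (s * u, s * v, 0))).
  { split; [apply (ball_frame p a b Hab), Hs | apply HL2; exists s; reflexivity]. }
  destruct (Hsub _ Hz h Hh) as [w [Hw Hdist]].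
  apply HL1 in Hw as [m ->]; exists m.
  rewrite <- (frame_hline_through p a b Hab m), hdist_frame by exact Hab; lra.
Qed.

Lemma approximating_hline h e rho : 0 < e -> e <= h ->
  1000 * (h * h * h) <= rho * (e * e) -> ball p h z0 ->
  subset (inter (ball p rho) L2) (nbhd L1 h) ->
  exists C, subset (inter (ball p h) L2) (nbhd (hline_through (hmul p (0, 0, C)) a b) e).
Proof.
  intros He Heh Hrho Hz0 Hsub.
  pose proof (frame_near_xaxis h rho ltac:(lra) Hsub) as Hnear.
  setoid_rewrite frame_hline_point in Hnear.
  apply (ball_frame p a b Hab) in Hz0.
  destruct (frame p a b z0) as [[x0 y0] t0] eqn:Hframe_z0.
  exists (twist (x0, y0, t0)); intros z [Hzb Hz] eta Heta.
  apply HL2 in Hz as [s ->].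
  apply (ball_frame p a b Hab) in Hzb; rewrite frame_hline_point, Hframe_z0 in Hzb.
  set (s' := x0 + s * (a * u + b * v)).
  exists (hmul (hmul p (0, 0, twist (x0, y0, t0))) (s' * a, s' * b, 0)).
  split; [exists s'; reflexivity|].
  rewrite <- (hdist_frame p a b Hab), frame_hline_through_vshift, frame_hline_point, Hframe_z0
    by exact Hab.
  pose proof (hline_close_to_xaxis x0 y0 t0 _ _ h e rho (rot_unit a b Hab u v Huv)
    He Heh Hrho Hz0 Hnear s Hzb).
  unfold s'; lra.
Qed.

End NormalizedLines.

Theorem lemma3p5 :
  exists A : R, 10 <= A /\
    forall (eps H r : R) (L1 L2 : pt -> Prop) (p : pt),
      0 < eps -> eps < 1 -> 1 <= H ->
      is_hline L1 -> is_hline L2 -> L1 p -> 0 < r ->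
      subset (inter (ball p (A * H ^ 3 * / (eps ^ 2) * r)) L2) (nbhd L1 (H * r)) ->
      exists L : pt -> Prop, is_hline L /\ subset L (vplane L1) /\
        subset (inter (ball p (H * r)) L2) (nbhd L (eps * r)).
Proof.
  exists 1000; split; [lra|].
  intros eps H r L1 L2 p Heps0 Heps1 HH HL1 HL2 Hp Hr Hsub.
  destruct (classic (exists z0, inter (ball p (H * r)) L2 z0)) as [[z0 [Hz0 Hz0L]] | Hempty].
  - destruct (is_hline_unit_at L1 p HL1 Hp) as [a [b [Hab HL1p]]].
    destruct (is_hline_unit_at L2 z0 HL2 Hz0L) as [u [v [Huv HL2z0]]].
    destruct (approximating_hline L1 L2 p z0 a b u v Hab Huv HL1p HL2z0
      (H * r) (eps * r) (1000 * H ^ 3 * / (eps ^ 2) * r)) as [C HC];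
      [nra | nra | apply Req_le; field; lra | exact Hz0 | exact Hsub |].
    exists (hline_through (hmul p (0, 0, C)) a b); split; [apply is_hline_through, Hab|].
    split; [|exact HC].
    intros z Hz; destruct (hline_through_vplane p a b C z Hz) as [w [Hw Hproj]].
    exists w; split; [apply HL1p, Hw | exact Hproj].
  - exists L1; split; [exact HL1|split].
    + intros z Hz; exists z; split; [exact Hz | reflexivity].
    + intros z Hz; exfalso; apply Hempty; exists z; exact Hz.
Qed.
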